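(* Let $R$ be a nonzero ring and let $T$ be a tree which is not barren. Then there exist an infinite index set $I$ and a family $\{E_i: i\in I\}$ of injective representations of $T$ in $R\text{-Mod}$ such that $\bigoplus_{i\in I}E_i$ is not an injective representation.
   Context: A quiver is a directed graph; a path is a finite composable sequence of arrows (vertices are trivial paths). A tree is a quiver $T$ with a vertex $r$ (the root) such that for every vertex $w$ there is a unique path from $r$ to $w$. The $i$-th stage of $T$ consists of the vertices $w$ whose path from the root has length $i$. $T$ is barren if the number $n_i$ of vertices in the $i$-th stage is finite for every $i$ and the sequence $n_1,n_2,\dots$ is eventually constant. A representation of $T$ in $R\text{-Mod}$ assigns a left $R$-module $X(v)$ to each vertex and an $R$-linear map $X(a):X(s(a))\to X(t(a))$ to each arrow $a$; morphisms are families of maps commuting with the $X(a)$. Injectivity is in this (Grothendieck) category of representations. *)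

From HB Require Import structures.
From mathcomp Require Import all_boot all_algebra.
From mathcomp Require Import boolp.
From Stdlib Require Import ProofIrrelevance FunctionalExtensionality.
From Stdlib Require List.

Set Implicit Arguments.
Unset Strict Implicit.
Unset Printing Implicit Defensive.

Import GRing.Theory.
Local Open Scope ring_scope.

Record quiver := Quiver {
  qvert : Type;
  qarr  : Type;
  qsrc  : qarr -> qvert;
  qtgt  : qarr -> qvert }.

Fixpoint is_qpath (Q : quiver) (v : qvert Q) (p : seq (qarr Q)) (w : qvert Q)
    : Prop :=
  match p with
  | [::] => v = w
  | a :: p' => qsrc a = v /\ is_qpath (qtgt a) p' w
  end.

Definition is_tree (Q : quiver) (r : qvert Q) : Prop :=
  forall w : qvert Q, exists! p : seq (qarr Q), is_qpath r p w.

Definition stage (Q : quiver) (r : qvert Q) (i : nat) (w : qvert Q) : Prop :=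
  exists p : seq (qarr Q), is_qpath r p w /\ size p = i.

Definition has_card (T : Type) (A : T -> Prop) (n : nat) : Prop :=
  exists f : 'I_n -> T, injective f /\ (forall w, A w <-> exists j, f j = w).

Definition barren (Q : quiver) (r : qvert Q) : Prop :=
  exists n : nat -> nat,
    (forall i, has_card (stage r i) (n i)) /\
    exists N : nat, forall i, (N <= i)%N -> n i = n N.

Definition infinite_type (I : Type) : Prop :=
  ~ exists n : nat, has_card (fun _ : I => True) n.

Unset Implicit Arguments.
Record rep (R : pzRingType) (Q : quiver) := Rep {
  rmod : qvert Q -> lmodType R;
  rmap : forall a : qarr Q, rmod (qsrc a) -> rmod (qtgt a);
  rmap_lin : forall a : qarr Q, linear (rmap a) }.
Set Implicit Arguments.
Arguments rmod {R Q} r v.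
Arguments rmap {R Q} r a _.
Arguments rmap_lin {R Q} r a.

Definition is_rep_hom (R : pzRingType) (Q : quiver) (X Y : rep R Q)
    (f : forall v : qvert Q, rmod X v -> rmod Y v) : Prop :=
  (forall v, linear (f v)) /\
  (forall (a : qarr Q) (x : rmod X (qsrc a)),
      f (qtgt a) (rmap X a x) = rmap Y a (f (qsrc a) x)).

Definition rep_mono (R : pzRingType) (Q : quiver) (X Y : rep R Q)
    (f : forall v : qvert Q, rmod X v -> rmod Y v) : Prop :=
  is_rep_hom f /\
  forall (Z : rep R Q) (g h : forall v : qvert Q, rmod Z v -> rmod X v),
    is_rep_hom g -> is_rep_hom h ->
    (forall v z, f v (g v z) = f v (h v z)) ->
    forall v z, g v z = h v z.

Definition injective_rep (R : pzRingType) (Q : quiver) (E : rep R Q) : Prop :=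
  forall (X Y : rep R Q)
         (f : forall v : qvert Q, rmod X v -> rmod Y v)
         (g : forall v : qvert Q, rmod X v -> rmod E v),
    rep_mono f -> is_rep_hom g ->
    exists h : forall v : qvert Q, rmod Y v -> rmod E v,
      is_rep_hom h /\ forall v x, h v (f v x) = g v x.

Section DirectSum.
Variables (R : pzRingType) (I : Type) (M : I -> lmodType R).

Definition fin_supp (f : forall i, M i) : Prop :=
  exists s : seq I, forall i, ~ List.In i s -> f i = 0.

Record dsum := DSum { dval : forall i, M i; dsuppP : fin_supp dval }.

Lemma dsum_ext (x y : dsum) : (forall i, dval x i = dval y i) -> x = y.
Proof.
case: x => fx px; case: y => fy py /= H.
have E : fx = fy by apply: functional_extensionality_dep.
subst fy; by rewrite (proof_irrelevance _ px py).
Qed.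

HB.instance Definition _ := gen_eqMixin dsum.
HB.instance Definition _ := gen_choiceMixin dsum.

Lemma dsum0_supp : fin_supp (fun i => 0).
Proof. by exists [::]. Qed.
Definition dsum0 : dsum := DSum dsum0_supp.

Lemma dsum_add_supp (x y : dsum) : fin_supp (fun i => dval x i + dval y i).
Proof.
case: x => fx [s1 h1]; case: y => fy [s2 h2] /=.
exists (s1 ++ s2) => i Hi.
rewrite h1 ?h2 ?addr0 // => H; apply: Hi; apply List.in_or_app; tauto.
Qed.
Definition dsum_add (x y : dsum) : dsum := DSum (dsum_add_supp x y).

Lemma dsum_opp_supp (x : dsum) : fin_supp (fun i => - dval x i).
Proof. case: x => fx [s h] /=; exists s => i Hi; by rewrite h ?oppr0. Qed.
Definition dsum_opp (x : dsum) : dsum := DSum (dsum_opp_supp x).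

Lemma dsum_scale_supp (a : R) (x : dsum) : fin_supp (fun i => a *: dval x i).
Proof. case: x => fx [s h] /=; exists s => i Hi; by rewrite h ?scaler0. Qed.
Definition dsum_scale (a : R) (x : dsum) : dsum := DSum (dsum_scale_supp a x).

Lemma dsum_addA : associative dsum_add.
Proof. by move=> x y z; apply: dsum_ext => i /=; rewrite addrA. Qed.
Lemma dsum_addC : commutative dsum_add.
Proof. by move=> x y; apply: dsum_ext => i /=; rewrite addrC. Qed.
Lemma dsum_add0 : left_id dsum0 dsum_add.
Proof. by move=> x; apply: dsum_ext => i /=; rewrite add0r. Qed.
Lemma dsum_addN : left_inverse dsum0 dsum_opp dsum_add.
Proof. by move=> x; apply: dsum_ext => i /=; rewrite addNr. Qed.

HB.instance Definition _ :=
  GRing.isZmodule.Build dsum dsum_addA dsum_addC dsum_add0 dsum_addN.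

Lemma dsum_scaleA a b v : dsum_scale a (dsum_scale b v) = dsum_scale (a * b) v.
Proof. by apply: dsum_ext => i /=; rewrite scalerA. Qed.
Lemma dsum_scale1 : left_id 1 dsum_scale.
Proof. by move=> x; apply: dsum_ext => i /=; rewrite scale1r. Qed.
Lemma dsum_scaleDr : right_distributive dsum_scale +%R.
Proof. by move=> a x y; apply: dsum_ext => i /=; rewrite scalerDr. Qed.
Lemma dsum_scaleDl v : {morph dsum_scale^~ v : a b / a + b}.
Proof. by move=> a b; apply: dsum_ext => i /=; rewrite scalerDl. Qed.

HB.instance Definition _ :=
  GRing.Zmodule_isLmodule.Build R dsum dsum_scaleA dsum_scale1
    dsum_scaleDr dsum_scaleDl.

End DirectSum.

Lemma linear_map0 (R : pzRingType) (U V : lmodType R) (f : U -> V) :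
  linear f -> f 0 = 0.
Proof.
move=> Lf; have := Lf 1 0 0; rewrite !scale1r !addr0 => H.
by apply: (@addrI _ (f 0)); rewrite addr0 -H.
Qed.

Section DsumRep.
Variables (R : pzRingType) (Q : quiver) (I : Type) (E : I -> rep R Q).

Definition dsum_mod (v : qvert Q) : lmodType R := dsum (fun i => rmod (E i) v).

Lemma dsum_map_supp (a : qarr Q) (x : dsum_mod (qsrc a)) :
  fin_supp (fun i => rmap (E i) a (dval x i)).
Proof.
case: x => fx [s h]; exists s => i Hi /=.
by rewrite h // (linear_map0 (rmap_lin (E i) a)).
Qed.

Definition dsum_map (a : qarr Q) (x : dsum_mod (qsrc a)) : dsum_mod (qtgt a) :=
  DSum (dsum_map_supp x).

Lemma dsum_map_lin (a : qarr Q) : linear (@dsum_map a).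
Proof.
move=> c x y; apply: dsum_ext => i /=.
exact: (rmap_lin (E i) a).
Qed.

Definition dsum_rep : rep R Q := @Rep R Q dsum_mod (@dsum_map) dsum_map_lin.

End DsumRep.

(* The character module Hom_Z(R, Q/Z) is a nonzero injective
   R-module (Q/Z is divisible, so additive maps into it extend, by Zorn's
   lemma).  For an injective module E and a vertex w, the representation with E
   at the vertices from which w is reachable, zero elsewhere and identity maps,
   is injective: a morphism is extended at w and transported along the unique
   paths to w.  A non-barren tree has an infinite antichain w_0, w_1, ...:
   either some stage is infinite, or one follows vertices whose stage counts
   never stabilise and collects a sibling at each branching.  The direct sum of
   the representations at the w_j is not injective: it would be a retract of the
   product, and the constant family at the root would be sent to a finitely
   supported one, which is zero at some w_j where the constant family is not. *)

From HB Require Import structures.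
From mathcomp Require Import all_boot all_order all_algebra archimedean.
From mathcomp Require Import boolp classical_sets.
From Stdlib Require Import ProofIrrelevance FunctionalExtensionality.
From Stdlib Require List.

Set Implicit Arguments.
Unset Strict Implicit.
Unset Printing Implicit Defensive.

Import Order.TTheory GRing.Theory Num.Theory.
Local Open Scope ring_scope.

Section LinearMap.
Variables (R : pzRingType) (U V : lmodType R) (f : U -> V).
Hypothesis f_lin : linear f.

Lemma linear_mapD x y : f (x + y) = f x + f y.
Proof. by have := f_lin 1 x y; rewrite !scale1r. Qed.

Lemma linear_mapZ a x : f (a *: x) = a *: f x.
Proof. by have := f_lin a x 0; rewrite !addr0 (linear_map0 f_lin) addr0. Qed.

Lemma linear_mapN x : f (- x) = - f x.
Proof. by rewrite -scaleN1r linear_mapZ scaleN1r. Qed.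

Lemma linear_mapB x y : f (x - y) = f x - f y.
Proof. by rewrite linear_mapD linear_mapN. Qed.

End LinearMap.

Section ZmodMorphism.
Variables (U V : zmodType) (f : U -> V).
Hypothesis f_add : zmod_morphism f.

Lemma zmod_morphism0 : f 0 = 0.
Proof. by have := f_add 0 0; rewrite !subrr. Qed.

Lemma zmod_morphismN x : f (- x) = - f x.
Proof. by have := f_add 0 x; rewrite !sub0r zmod_morphism0 sub0r. Qed.

Lemma zmod_morphismD x y : f (x + y) = f x + f y.
Proof. by have := f_add x (- y); rewrite opprK zmod_morphismN opprK. Qed.

End ZmodMorphism.

Definition injective_lmod (R : pzRingType) (E : lmodType R) : Prop :=
  forall (A B : lmodType R) (phi : A -> B) (g : A -> E),
    linear phi -> injective phi -> linear g ->
    exists h : B -> E, linear h /\ forall a, h (phi a) = g a.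

Section Submodule.
Variables (R : pzRingType) (M : lmodType R).

Record submod_pred := SubmodPred {
  submod_mem :> M -> Prop;
  submod_mem0 : submod_mem 0;
  submod_memD : forall x y, submod_mem x -> submod_mem y -> submod_mem (x + y);
  submod_memN : forall x, submod_mem x -> submod_mem (- x);
  submod_memZ : forall a x, submod_mem x -> submod_mem (a *: x) }.

Variable C : submod_pred.

Record submod := Submod { subval : M; subvalP : C subval }.

Lemma subval_inj (x y : submod) : subval x = subval y -> x = y.
Proof.
case: x => x px; case: y => y py /= exy; subst y.
by rewrite (proof_irrelevance _ px py).
Qed.

HB.instance Definition _ := gen_eqMixin submod.
HB.instance Definition _ := gen_choiceMixin submod.

Definition submod0 := Submod (submod_mem0 C).
Definition submod_add (x y : submod) := Submod (submod_memD (subvalP x) (subvalP y)).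
Definition submod_opp (x : submod) := Submod (submod_memN (subvalP x)).
Definition submod_scale a (x : submod) := Submod (submod_memZ a (subvalP x)).

Lemma submod_addA : associative submod_add.
Proof. by move=> x y z; apply: subval_inj; rewrite /= addrA. Qed.
Lemma submod_addC : commutative submod_add.
Proof. by move=> x y; apply: subval_inj; rewrite /= addrC. Qed.
Lemma submod_add0 : left_id submod0 submod_add.
Proof. by move=> x; apply: subval_inj; rewrite /= add0r. Qed.
Lemma submod_addN : left_inverse submod0 submod_opp submod_add.
Proof. by move=> x; apply: subval_inj; rewrite /= addNr. Qed.

HB.instance Definition _ :=
  GRing.isZmodule.Build submod submod_addA submod_addC submod_add0 submod_addN.

Lemma submod_scaleA a b v :
  submod_scale a (submod_scale b v) = submod_scale (a * b) v.
Proof. by apply: subval_inj; rewrite /= scalerA. Qed.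
Lemma submod_scale1 : left_id 1 submod_scale.
Proof. by move=> x; apply: subval_inj; rewrite /= scale1r. Qed.
Lemma submod_scaleDr : right_distributive submod_scale +%R.
Proof. by move=> a x y; apply: subval_inj; rewrite /= scalerDr. Qed.
Lemma submod_scaleDl v : {morph submod_scale^~ v : a b / a + b}.
Proof. by move=> a b; apply: subval_inj; rewrite /= scalerDl. Qed.

HB.instance Definition _ := GRing.Zmodule_isLmodule.Build R submod
  submod_scaleA submod_scale1 submod_scaleDr submod_scaleDl.

End Submodule.

Section ProductModule.
Variables (R : pzRingType) (I : Type) (M : I -> lmodType R).

Record prodmod := ProdMod { pval : forall i, M i }.

Lemma pval_inj (x y : prodmod) : (forall i, pval x i = pval y i) -> x = y.
Proof.
by case: x => x; case: y => y /= exy; rewrite (functional_extensionality_dep _ _ exy).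
Qed.

HB.instance Definition _ := gen_eqMixin prodmod.
HB.instance Definition _ := gen_choiceMixin prodmod.

Definition prodmod0 := ProdMod (fun i => 0 : M i).
Definition prodmod_add (x y : prodmod) := ProdMod (fun i => pval x i + pval y i).
Definition prodmod_opp (x : prodmod) := ProdMod (fun i => - pval x i).
Definition prodmod_scale a (x : prodmod) := ProdMod (fun i => a *: pval x i).

Lemma prodmod_addA : associative prodmod_add.
Proof. by move=> x y z; apply: pval_inj => i /=; rewrite addrA. Qed.
Lemma prodmod_addC : commutative prodmod_add.
Proof. by move=> x y; apply: pval_inj => i /=; rewrite addrC. Qed.
Lemma prodmod_add0 : left_id prodmod0 prodmod_add.
Proof. by move=> x; apply: pval_inj => i /=; rewrite add0r. Qed.
Lemma prodmod_addN : left_inverse prodmod0 prodmod_opp prodmod_add.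
Proof. by move=> x; apply: pval_inj => i /=; rewrite addNr. Qed.

HB.instance Definition _ := GRing.isZmodule.Build prodmod
  prodmod_addA prodmod_addC prodmod_add0 prodmod_addN.

Lemma prodmod_scaleA a b v :
  prodmod_scale a (prodmod_scale b v) = prodmod_scale (a * b) v.
Proof. by apply: pval_inj => i /=; rewrite scalerA. Qed.
Lemma prodmod_scale1 : left_id 1 prodmod_scale.
Proof. by move=> x; apply: pval_inj => i /=; rewrite scale1r. Qed.
Lemma prodmod_scaleDr : right_distributive prodmod_scale +%R.
Proof. by move=> a x y; apply: pval_inj => i /=; rewrite scalerDr. Qed.
Lemma prodmod_scaleDl v : {morph prodmod_scale^~ v : a b / a + b}.
Proof. by move=> a b; apply: pval_inj => i /=; rewrite scalerDl. Qed.

HB.instance Definition _ := GRing.Zmodule_isLmodule.Build R prodmod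
  prodmod_scaleA prodmod_scale1 prodmod_scaleDr prodmod_scaleDl.

End ProductModule.

Definition frac (x : rat) : rat := x - (Num.floor x)%:~R.

Lemma frac_itv (x : rat) : (0 <= frac x) && (frac x < 1).
Proof.
rewrite /frac subr_ge0 floor_le /= ltrBlDl.
by have := floorD1_gt x; rewrite intrD addrC.
Qed.

Lemma fracDz (x : rat) (m : int) : frac (x + m%:~R) = frac x.
Proof.
by rewrite /frac floorDrz ?intr_int // intrKfloor intrD opprD addrACA subrr addr0.
Qed.

Lemma fracK (x : rat) : 0 <= x < 1 -> frac x = x.
Proof. by move=> x01; rewrite /frac (@floor_def _ x 0) ?subr0. Qed.

Lemma frac_fracl (x y : rat) : frac (frac x + y) = frac (x + y).
Proof. by rewrite [frac x]/frac addrAC -intrN fracDz. Qed.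

Lemma frac_fracr (x y : rat) : frac (x + frac y) = frac (x + y).
Proof. by rewrite addrC frac_fracl addrC. Qed.

Record QZ := MkQZ { qzval : rat; qzvalP : (0 <= qzval) && (qzval < 1) }.

Lemma qzval_inj (x y : QZ) : qzval x = qzval y -> x = y.
Proof.
case: x => x px; case: y => y py /= exy; subst y.
by rewrite (proof_irrelevance _ px py).
Qed.

HB.instance Definition _ := gen_eqMixin QZ.
HB.instance Definition _ := gen_choiceMixin QZ.

Definition qfrac (x : rat) : QZ := MkQZ (frac_itv x).

Lemma qzvalK (x : QZ) : qfrac (qzval x) = x.
Proof. by apply: qzval_inj; rewrite /= fracK //; case: x. Qed.

Definition qz_add (x y : QZ) := qfrac (qzval x + qzval y).
Definition qz_opp (x : QZ) := qfrac (- qzval x).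

Lemma qz_addA : associative qz_add.
Proof. by move=> x y z; apply: qzval_inj; rewrite /= frac_fracl frac_fracr addrA. Qed.
Lemma qz_addC : commutative qz_add.
Proof. by move=> x y; apply: qzval_inj; rewrite /= addrC. Qed.
Lemma qz_add0 : left_id (qfrac 0) qz_add.
Proof. by move=> x; apply: qzval_inj; rewrite /= fracK ?add0r ?fracK //; case: x. Qed.
Lemma qz_addN : left_inverse (qfrac 0) qz_opp qz_add.
Proof. by move=> x; apply: qzval_inj; rewrite /= frac_fracl addNr. Qed.

HB.instance Definition _ := GRing.isZmodule.Build QZ qz_addA qz_addC qz_add0 qz_addN.

Lemma qfracD (x y : rat) : qfrac (x + y) = qfrac x + qfrac y.
Proof. by apply: qzval_inj; rewrite /= frac_fracl frac_fracr. Qed.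

Lemma qfrac_is_zmod_morphism : zmod_morphism qfrac.
Proof.
move=> x y; have qfracN : qfrac (- y) = - qfrac y.
  by apply/eqP; rewrite -subr_eq0 opprK -qfracD addNr.
by rewrite qfracD qfracN.
Qed.

Lemma qfracMz (x : rat) (n : int) : qfrac (x *~ n) = qfrac x *~ n.
Proof.
pose qf : {additive rat -> QZ} :=
  HB.pack qfrac (GRing.isZmodMorphism.Build _ _ qfrac qfrac_is_zmod_morphism).
exact: (raddfMz qf).
Qed.

Lemma qfrac_int (n : int) : qfrac n%:~R = 0.
Proof. by apply: qzval_inj; rewrite /= -[n%:~R]add0r fracDz fracK. Qed.

Lemma QZ_divisible (d : QZ) (m : nat) : (0 < m)%N -> exists e : QZ, e *+ m = d.
Proof.
move=> m_gt0; exists (qfrac (qzval d / m%:R)).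
rewrite pmulrn -qfracMz -pmulrn -[_ / _ *+ m]mulr_natr divfK ?qzvalK //.
by rewrite pnatr_eq0 -lt0n.
Qed.

Lemma qfrac_invn_eq0 (m : nat) : (1 < m)%N -> qfrac m%:R^-1 != 0.
Proof.
move=> m_gt1; apply/eqP => /(congr1 qzval) /=; rewrite fracK.
  by apply/eqP; rewrite invr_eq0 pnatr_eq0 -lt0n ltnW.
by rewrite invr_ge0 ler0n /= invf_lt1 ?ltr0n ?ltr1n // ltnW.
Qed.

Lemma qfrac_invnMz (m : nat) (n : int) : (0 < m)%N -> (n %% m)%Z = 0 ->
  qfrac m%:R^-1 *~ n = 0.
Proof.
move=> m_gt0 nm0; rewrite -qfracMz (divz_eq n m) nm0 addr0 mulrC mulrzA.
rewrite -pmulrn -[m%:R^-1 *+ m]mulr_natr mulVf ?qfrac_int //.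
by rewrite pnatr_eq0 -lt0n.
Qed.

Section ExtensionToQZ.
Variable B : zmodType.

Definition subgroup (C : B -> Prop) :=
  C 0 /\ forall x y, C x -> C y -> C (x - y).

Definition additive_on (C : B -> Prop) (h : B -> QZ) :=
  forall x y, C x -> C y -> h (x - y) = h x - h y.

Section Subgroup.
Variables (C : B -> Prop) (C_sub : subgroup C).

Lemma subgroupN x : C x -> C (- x).
Proof. by move=> Cx; rewrite -sub0r; apply: C_sub.2 => //; exact: C_sub.1. Qed.

Lemma subgroupD x y : C x -> C y -> C (x + y).
Proof. by move=> Cx Cy; rewrite -[y]opprK; apply: C_sub.2 => //; apply: subgroupN. Qed.

Lemma subgroupMn x m : C x -> C (x *+ m).
Proof.
move=> Cx; elim: m => [|m IHm]; first by rewrite mulr0n; exact: C_sub.1.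
by rewrite mulrS; apply: subgroupD.
Qed.

Lemma subgroupMz x n : C x -> C (x *~ n).
Proof.
move=> Cx; case: n => m; first exact: subgroupMn.
by rewrite NegzE mulrNz; apply/subgroupN/subgroupMn.
Qed.

Lemma subgroup_mulz_mod b m : (0 < m)%N -> C (b *+ m) ->
    (forall k, (0 < k)%N -> C (b *+ k) -> (m <= k)%N) ->
  forall n, C (b *~ n) -> (n %% m)%Z = 0.
Proof.
move=> m_gt0 Cbm m_min n Cbn.
have mz_gt0 : (0 < m%:Z)%R by rewrite ltz_nat.
have Cr : C (b *~ (n %% m)%Z).
  have -> : modz n m = n - m%:Z * divz n m.
    by rewrite {2}(divz_eq n m) mulrC addrAC subrr add0r.
  by rewrite mulrzBr mulrzA; apply: C_sub.2 => //; apply: subgroupMz.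
move: Cr (modz_ge0 n (lt0r_neq0 mz_gt0)) (ltz_pmod n mz_gt0).
case: (n %% m)%Z => [[|k]|k] // Cr _ k_lt_m.
by have := m_min k.+1 isT Cr; rewrite leqNgt -ltz_nat k_lt_m.
Qed.

End Subgroup.

Section AdditiveOn.
Variables (C : B -> Prop) (h : B -> QZ).
Hypotheses (C_sub : subgroup C) (h_add : additive_on C h).

Lemma additive_on0 : h 0 = 0.
Proof. by have := h_add C_sub.1 C_sub.1; rewrite !subrr. Qed.

Lemma additive_onN x : C x -> h (- x) = - h x.
Proof. by move=> Cx; have := h_add C_sub.1 Cx; rewrite !sub0r additive_on0 sub0r. Qed.

Lemma additive_onD x y : C x -> C y -> h (x + y) = h x + h y.
Proof.
move=> Cx Cy; have := h_add Cx (subgroupN C_sub Cy).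
by rewrite opprK additive_onN // opprK.
Qed.

Lemma additive_onMz x n : C x -> h (x *~ n) = h x *~ n.
Proof.
move=> Cx; have hMn m : h (x *+ m) = h x *+ m.
  elim: m => [|m IHm]; first by rewrite !mulr0n additive_on0.
  by rewrite !mulrS additive_onD ?IHm //; apply: subgroupMn.
case: n => m; first exact: hMn.
by rewrite !NegzE !mulrNz additive_onN ?hMn //; apply: subgroupMn.
Qed.

End AdditiveOn.

Record partial_hom := PartialHom {
  pdom : B -> Prop;
  pfun : B -> QZ;
  pdom_subgroup : subgroup pdom;
  pfun_additive : additive_on pdom pfun }.

Definition extends (p q : partial_hom) :=
  (forall x, pdom p x -> pdom q x) /\ (forall x, pdom p x -> pfun q x = pfun p x).

Lemma extends_refl p : extends p p.
Proof. by []. Qed.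

Lemma extends_trans p q s : extends p q -> extends q s -> extends p s.
Proof. by move=> [pq hpq] [qs hqs]; split=> x px; rewrite ?hqs ?hpq; auto. Qed.

Section Adjoin.
Variables (p : partial_hom) (b : B) (d : QZ).
Hypothesis d_compat : forall n, pdom p (b *~ n) -> pfun p (b *~ n) = d *~ n.

Local Notation C := (pdom p).
Local Notation h := (pfun p).
Let C_sub := pdom_subgroup p.
Let h_add := @pfun_additive p.

Definition adjoin_dom x := exists c n, C c /\ x = c + b *~ n.

Definition adjoin_fun (x : B) : QZ :=
  if pselect (adjoin_dom x) is left cn
  then let: exist c nP := cid cn in h c + d *~ projT1 (cid nP)
  else 0.

Lemma adjoin_funE c n : C c -> adjoin_fun (c + b *~ n) = h c + d *~ n.
Proof.
move=> Cc; rewrite /adjoin_fun; case: pselect => [cn|[]]; last by exists c, n.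
case: (cid cn) => c' nP; case: (cid nP) => n' /= [Cc' e].
have bnn' : b *~ (n - n') = c' - c.
  by apply/eqP; rewrite mulrzBr subr_eq addrAC -e addrAC subrr add0r.
have := @d_compat (n - n'); rewrite bnn' h_add // mulrzBr => /(_ (C_sub.2 _ _ Cc' Cc)).
by move/eqP; rewrite subr_eq => /eqP ->; rewrite addrAC subrK addrC.
Qed.

Lemma adjoin_dom_subgroup : subgroup adjoin_dom.
Proof.
split; first by exists 0, 0; rewrite mulr0z addr0; split=> //; exact: C_sub.1.
move=> _ _ [c [n [Cc ->]]] [c' [n' [Cc' ->]]].
exists (c - c'), (n - n'); split; first exact: C_sub.2.
by rewrite mulrzBr opprD addrACA.
Qed.

Lemma adjoin_fun_additive : additive_on adjoin_dom adjoin_fun.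
Proof.
move=> _ _ [c [n [Cc ->]]] [c' [n' [Cc' ->]]].
have -> : c + b *~ n - (c' + b *~ n') = (c - c') + b *~ (n - n').
  by rewrite mulrzBr opprD addrACA.
rewrite !adjoin_funE //; last exact: C_sub.2.
by rewrite h_add // mulrzBr opprD addrACA.
Qed.

Lemma adjoin_extends : exists q, extends p q /\ pdom q b /\ pfun q b = d.
Proof.
exists (PartialHom adjoin_dom_subgroup adjoin_fun_additive) => /=.
have C0 : C 0 := C_sub.1.
split; [split=> x Cx|split].
- by exists x, 0; rewrite mulr0z addr0.
- by have := adjoin_funE 0 Cx; rewrite !mulr0z !addr0.
- by exists 0, 1; rewrite add0r.
- by have := adjoin_funE 1 C0; rewrite !add0r (additive_on0 C_sub h_add) add0r.
Qed.

End Adjoin.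

Lemma compatible_value (p : partial_hom) (b : B) :
  exists d, forall n, pdom p (b *~ n) -> pfun p (b *~ n) = d *~ n.
Proof.
have C_sub := pdom_subgroup p; have h_add := @pfun_additive p.
have [[m m_gt0 Cbm]|] :=
  pselect (exists2 m : nat, (0 < m)%N & pdom p (b *+ m)); last first.
  move=> none; exists 0 => -[] m Cbm.
    case: m Cbm => [|m] Cbm; first by rewrite mulr0z (additive_on0 C_sub h_add) mulr0z.
    by case: none; exists m.+1.
  case: none; exists m.+1 => //.
  by move: Cbm; rewrite NegzE mulrNz => /(subgroupN C_sub); rewrite opprK.
pose P m := (0 < m)%N && `[< pdom p (b *+ m) >].
have Pm : exists m, P m by exists m; rewrite /P m_gt0; apply/asboolP.
case: (ex_minnP Pm) => m0 /andP[m0_gt0 /asboolP Cbm0] m0_min.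
have [e em0] := QZ_divisible (pfun p (b *+ m0)) m0_gt0.
exists e => n Cbn.
have m0_dvd_n : (n %% m0)%Z = 0.
  apply: (subgroup_mulz_mod C_sub m0_gt0 Cbm0 _ Cbn) => k k_gt0 Cbk.
  by apply: m0_min; rewrite /P k_gt0; apply/asboolP.
rewrite (divz_eq n m0) m0_dvd_n addr0 mulrC mulrzA (additive_onMz C_sub h_add) //.
by rewrite -[b *~ m0]/(b *+ m0) -em0 pmulrn -mulrzA.
Qed.

End ExtensionToQZ.

Section ZornQZ.
Variables (B : zmodType) (p0 : partial_hom B).

Let T := {p : partial_hom B | extends p0 p}.
Let ext (s t : T) : bool := `[< extends (sval s) (sval t) >].

Section ChainBound.
Variables (A : set T) (A_tot : total_on A ext) (t1 : T) (At1 : A t1).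

Let union_dom x := exists t, A t /\ pdom (sval t) x.

Let union_fun x :=
  if pselect (union_dom x) is left tx then pfun (sval (projT1 (cid tx))) x else 0.

Let chain_comparable s t : A s -> A t ->
  extends (sval s) (sval t) \/ extends (sval t) (sval s).
Proof. by move=> As At; case: (A_tot As At) => /asboolP; auto. Qed.

Let union_funE t x : A t -> pdom (sval t) x -> union_fun x = pfun (sval t) x.
Proof.
move=> At tx; rewrite /union_fun; case: pselect => [ux|[]]; last by exists t.
case: (cid ux) => t' /= [At' t'x].
by case: (chain_comparable At At') => -[_ ->].
Qed.

Let union_dom2 x y : union_dom x -> union_dom y ->
  exists t, A t /\ pdom (sval t) x /\ pdom (sval t) y.
Proof.
move=> [s [As sx]] [t [At ty]].
by case: (chain_comparable As At) => -[st _]; [exists t | exists s]; auto.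
Qed.

Let union_dom_subgroup : subgroup union_dom.
Proof.
split; first by exists t1; split=> //; exact: (pdom_subgroup _).1.
move=> x y ux uy; have [t [At [tx ty]]] := union_dom2 ux uy.
by exists t; split=> //; apply: (pdom_subgroup _).2.
Qed.

Let union_fun_additive : additive_on union_dom union_fun.
Proof.
move=> x y ux uy; have [t [At [tx ty]]] := union_dom2 ux uy.
rewrite !(union_funE At) //; first exact: pfun_additive.
exact: (pdom_subgroup _).2.
Qed.

Lemma chain_upper_bound : exists t : T, forall s, A s -> ext s t.
Proof.
pose U := PartialHom union_dom_subgroup union_fun_additive.
have p0U : extends p0 U.
  have [p0t1_dom p0t1_fun] := svalP t1; split=> x p0x /=.
    by exists t1; split=> //; apply: p0t1_dom.
  by rewrite (union_funE At1) ?p0t1_fun //; apply: p0t1_dom.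
exists (exist _ U p0U) => s As; apply/asboolP; split=> x sx /=.
  by exists s.
by rewrite (union_funE As).
Qed.

End ChainBound.

Lemma QZ_extend : exists H : B -> QZ,
  zmod_morphism H /\ forall x, pdom p0 x -> H x = pfun p0 x.
Proof.
have [M M_max] : exists t : T, premaximal ext t.
  apply: (@ZL_preorder T (exist _ p0 (extends_refl p0)) ext).
  - by move=> t; apply/asboolP; exact: extends_refl.
  - by move=> r s t /asboolP rs /asboolP st; apply/asboolP; exact: extends_trans st.
  - move=> A A_tot; have [[t1 At1]|A0] := pselect (exists t, A t).
      exact: chain_upper_bound At1.
    by exists (exist _ p0 (extends_refl p0)) => s As; case: A0; exists s.
(* A maximal partial homomorphism is total: otherwise adjoin a missing element. *)
have M_total b : pdom (sval M) b.
  have [d d_compat] := compatible_value (sval M) b.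
  have [q [Mq [qb _]]] := adjoin_extends d_compat.
  have p0q : extends p0 q := extends_trans (svalP M) Mq.
  by have /asboolP [qM _] := M_max (exist _ q p0q) (introT (asboolP _) Mq); apply: qM.
exists (pfun (sval M)); split; first by move=> x y; exact: pfun_additive.
by move=> x p0x; rewrite ((svalP M).2 x p0x).
Qed.

End ZornQZ.

Section Separation.
Variable B : zmodType.

Lemma mulrz_eq0_mod (x : B) : x != 0 ->
  exists2 m, (1 < m)%N & forall n, x *~ n = 0 -> (n %% m)%Z = 0.
Proof.
move=> x_neq0; have zero_sub : subgroup (eq^~ (0 : B)).
  by split=> // y z -> ->; rewrite subrr.
have [[m m_gt0 xm0]|] := pselect (exists2 m : nat, (0 < m)%N & x *+ m = 0).
  pose P m := (0 < m)%N && (x *+ m == 0).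
  have Pm : exists m, P m by exists m; rewrite /P m_gt0 xm0 eqxx.
  case: (ex_minnP Pm) => m0 /andP[m0_gt0 /eqP xm00] m0_min.
  have m0_neq1 : m0 != 1%N.
    by apply: contraNneq x_neq0 => m01; rewrite -[x]mulr1n -m01 xm00.
  exists m0; first by rewrite ltn_neqAle eq_sym m0_neq1.
  apply: (subgroup_mulz_mod zero_sub m0_gt0 xm00) => k k_gt0 xk0.
  by apply: m0_min; rewrite /P k_gt0 xk0 eqxx.
move=> no_order; exists 2%N => // -[[|k]|k] // xk0; case: no_order.
  by exists k.+1.
by exists k.+1 => //; apply/eqP; rewrite -oppr_eq0 pmulrn -mulrNz -NegzE xk0.
Qed.

Lemma QZ_separates (x : B) : x != 0 ->
  exists H : B -> QZ, zmod_morphism H /\ H x != 0.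
Proof.
move=> x_neq0; have [m m_gt1 x_mod] := mulrz_eq0_mod x_neq0.
have zero_sub : subgroup (eq^~ (0 : B)) by split=> // y z -> ->; rewrite subrr.
have zero_add : additive_on (eq^~ (0 : B)) (fun=> 0) by move=> y z _ _; rewrite subrr.
pose p0 := PartialHom zero_sub zero_add.
have d_compat n : pdom p0 (x *~ n) -> pfun p0 (x *~ n) = qfrac m%:R^-1 *~ n.
  by move=> /x_mod xn; rewrite qfrac_invnMz // ltnW.
have [q [_ [qx qxE]]] := adjoin_extends d_compat.
have [H [H_add Hq]] := QZ_extend q.
by exists H; split=> //; rewrite Hq // qxE qfrac_invn_eq0.
Qed.

End Separation.

Section CharacterModule.
Variable R : pzRingType.

Record charmod := CharMod { chfun :> R -> QZ; chfun_additive : zmod_morphism chfun }.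

Lemma chfun_inj (f g : charmod) : (forall s, f s = g s) -> f = g.
Proof.
case: f => f f_add; case: g => g g_add /= fg.
move: g_add; rewrite -(functional_extensionality _ _ fg) => g_add.
by rewrite (proof_irrelevance _ f_add g_add).
Qed.

HB.instance Definition _ := gen_eqMixin charmod.
HB.instance Definition _ := gen_choiceMixin charmod.

Lemma charmod0_additive : zmod_morphism (fun _ : R => 0 : QZ).
Proof. by move=> x y; rewrite subr0. Qed.

Lemma charmod_add_additive (f g : charmod) : zmod_morphism (fun s => f s + g s).
Proof. by move=> x y; rewrite !chfun_additive opprD addrACA. Qed.

Lemma charmod_opp_additive (f : charmod) : zmod_morphism (fun s => - f s).
Proof. by move=> x y; rewrite chfun_additive opprB opprK addrC. Qed.

Lemma charmod_scale_additive (c : R) (f : charmod) : zmod_morphism (fun s => f (s * c)).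
Proof. by move=> x y; rewrite mulrBl chfun_additive. Qed.

Definition charmod0 := CharMod charmod0_additive.
Definition charmod_add f g := CharMod (charmod_add_additive f g).
Definition charmod_opp f := CharMod (charmod_opp_additive f).
Definition charmod_scale c f := CharMod (charmod_scale_additive c f).

Lemma charmod_addA : associative charmod_add.
Proof. by move=> f g h; apply: chfun_inj => s /=; rewrite addrA. Qed.
Lemma charmod_addC : commutative charmod_add.
Proof. by move=> f g; apply: chfun_inj => s /=; rewrite addrC. Qed.
Lemma charmod_add0 : left_id charmod0 charmod_add.
Proof. by move=> f; apply: chfun_inj => s /=; rewrite add0r. Qed.
Lemma charmod_addN : left_inverse charmod0 charmod_opp charmod_add.
Proof. by move=> f; apply: chfun_inj => s /=; rewrite addNr. Qed.

HB.instance Definition _ := GRing.isZmodule.Build charmod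
  charmod_addA charmod_addC charmod_add0 charmod_addN.

Lemma charmod_scaleA a b f :
  charmod_scale a (charmod_scale b f) = charmod_scale (a * b) f.
Proof. by apply: chfun_inj => s /=; rewrite mulrA. Qed.
Lemma charmod_scale1 : left_id 1 charmod_scale.
Proof. by move=> f; apply: chfun_inj => s /=; rewrite mulr1. Qed.
Lemma charmod_scaleDr : right_distributive charmod_scale +%R.
Proof. by move=> a f g; apply: chfun_inj. Qed.
Lemma charmod_scaleDl f : {morph charmod_scale^~ f : a b / a + b}.
Proof.
by move=> a b; apply: chfun_inj => s /=; rewrite mulrDr zmod_morphismD //; case: f.
Qed.

HB.instance Definition _ := GRing.Zmodule_isLmodule.Build R charmod
  charmod_scaleA charmod_scale1 charmod_scaleDr charmod_scaleDl.

(* Extend [a |-> g a 1] to an additive [H : M -> Q/Z], then linearize it as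
   [b |-> (s |-> H (s *: b))]. *)
Lemma charmod_injective : injective_lmod charmod.
Proof.
move=> A M phi g phi_lin phi_inj g_lin.
pose im b := exists a, phi a = b.
pose g1 b := if pselect (im b) is left ab then g (projT1 (cid ab)) 1 else 0.
have g1E a : g1 (phi a) = g a 1.
  rewrite /g1; case: pselect => [ab|[]]; last by exists a.
  by case: (cid ab) => a' /= /phi_inj ->.
have im_sub : subgroup im.
  split; first by exists 0; exact: linear_map0.
  by move=> _ _ [a <-] [a' <-]; exists (a - a'); rewrite linear_mapB.
have g1_add : additive_on im g1.
  by move=> _ _ [a <-] [a' <-]; rewrite -linear_mapB // !g1E (linear_mapB g_lin).
have [H [H_add H_g1]] := QZ_extend (PartialHom im_sub g1_add).
have Hb_add b : zmod_morphism (fun s => H (s *: b)).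
  by move=> x y; rewrite scalerBl H_add.
exists (fun b => CharMod (Hb_add b)); split.
  move=> c x y; apply: chfun_inj => s /=.
  by rewrite scalerDr scalerA (zmod_morphismD H_add).
move=> a; apply: chfun_inj => s /=.
rewrite -linear_mapZ // H_g1; last by exists (s *: a).
by rewrite /= g1E (linear_mapZ g_lin) /= mul1r.
Qed.

End CharacterModule.

Lemma charmod_neq0 (R : nzRingType) : exists f : charmod R, f <> 0.
Proof.
have [H [H_add H1]] := QZ_separates (oner_neq0 R).
exists (CharMod H_add) => /(congr1 (fun f : charmod R => f 1)) /= H10.
by move: H1; rewrite H10 eqxx.
Qed.

Section QuiverPaths.
Variable Q : quiver.

Definition reach (u v : qvert Q) := exists p, is_qpath u p v.

Lemma is_qpath_cat (u v w : qvert Q) (p q : seq (qarr Q)) :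
  is_qpath u p v -> is_qpath v q w -> is_qpath u (p ++ q) w.
Proof.
elim: p u => [|a p IHp] u /=; first by move=> ->.
by move=> [au pv] qw; split=> //; apply: IHp.
Qed.

Lemma reach_refl (u : qvert Q) : reach u u.
Proof. by exists [::]. Qed.

Lemma reach_trans (u v w : qvert Q) : reach u v -> reach v w -> reach u w.
Proof. by move=> [p up] [q vq]; exists (p ++ q); apply: is_qpath_cat up vq. Qed.

Lemma reach_arrow (a : qarr Q) w : reach (qtgt a) w -> reach (qsrc a) w.
Proof. by move=> [p ap]; exists (a :: p). Qed.

Variable r : qvert Q.
Hypothesis Q_tree : is_tree r.

Lemma reach_root (v : qvert Q) : reach r v.
Proof. by have [p [rp _]] := Q_tree v; exists p. Qed.

Lemma is_qpath_uniq (u v : qvert Q) (p p' : seq (qarr Q)) :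
  is_qpath u p v -> is_qpath u p' v -> p = p'.
Proof.
move=> up up'; have [q rq] := reach_root u; have [p0 [_ uniq_v]] := Q_tree v.
have := uniq_v _ (is_qpath_cat rq up); rewrite (uniq_v _ (is_qpath_cat rq up')).
by elim: q {rq} => // a q IHq [/IHq].
Qed.

End QuiverPaths.

Section Transport.
Variables (R : pzRingType) (Q : quiver) (X : rep R Q).

(* A relation rather than a function: the vertex, hence the module, changes
   along [p]. *)
Fixpoint transport (v : qvert Q) (x : rmod X v) (p : seq (qarr Q))
    (u : qvert Q) (z : rmod X u) {struct p} : Prop :=
  match p with
  | [::] => exists e : v = u, eq_rect v (rmod X) x u e = z
  | a :: p' => exists e : qsrc a = v,
      transport (rmap X a (eq_rect_r (rmod X) x e)) p' z
  end.

Lemma transport_fun v x p u z z' :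
  @transport v x p u z -> @transport v x p u z' -> z = z'.
Proof.
elim: p v x => [|a p IHp] v x /=.
  by move=> [e <-] [e' <-]; rewrite (proof_irrelevance _ e e').
move=> [e xz] [e' xz']; rewrite (proof_irrelevance _ e e') in xz.
exact: IHp xz xz'.
Qed.

Lemma transport_exists v p u : is_qpath v p u ->
  forall x, exists z, @transport v x p u z.
Proof.
elim: p v => [|a p IHp] v /=; first by move=> -> x; exists x, erefl.
move=> [<- pu] x; have [z xz] := IHp _ pu (rmap X a x).
by exists z, erefl.
Qed.

Lemma transport_qpath v x p u z : @transport v x p u z -> is_qpath v p u.
Proof.
elim: p v x => [|a p IHp] v x /=; first by move=> [e _].
by move=> [e xz]; split=> //; apply: IHp xz.
Qed.

Lemma transport_cons (a : qarr Q) x p u z :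
  transport (rmap X a x) p z -> @transport (qsrc a) x (a :: p) u z.
Proof. by exists erefl. Qed.

Lemma transport_linear v x y p u z z' c :
  @transport v x p u z -> @transport v y p u z' ->
  @transport v (c *: x + y) p u (c *: z + z').
Proof.
elim: p v x y => [|a p IHp] v x y /=.
  move=> [e <-] [e' <-]; subst u.
  by rewrite (proof_irrelevance _ e' erefl); exists erefl.
move=> [e xz] [e' yz']; subst v; rewrite (proof_irrelevance _ e' erefl) in yz'.
by exists erefl; rewrite /= (rmap_lin X a); exact: IHp.
Qed.

End Transport.

Lemma transport_hom (R : pzRingType) (Q : quiver) (X Y : rep R Q)
    (f : forall v, rmod X v -> rmod Y v) : is_rep_hom f ->
  forall v x p u z, @transport _ _ X v x p u z ->
    @transport _ _ Y v (f v x) p u (f u z).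
Proof.
move=> [_ f_comm] v x p; elim: p v x => [|a p IHp] v x u z /=.
  by move=> [e <-]; subst u; exists erefl.
by move=> [e xz]; subst v; exists erefl; rewrite /= -f_comm; exact: IHp.
Qed.

Section Kernel.
Variables (R : pzRingType) (Q : quiver) (X Y : rep R Q).
Variables (f : forall v, rmod X v -> rmod Y v) (f_hom : is_rep_hom f).
Arguments f : clear implicits.

Definition ker_pred (v : qvert Q) : submod_pred (rmod X v).
Proof.
refine (@SubmodPred _ _ (fun x => f v x = 0) _ _ _ _).
- exact: linear_map0 (f_hom.1 v).
- by move=> x y fx fy; rewrite (linear_mapD (f_hom.1 v)) fx fy addr0.
- by move=> x fx; rewrite (linear_mapN (f_hom.1 v)) fx oppr0.
- by move=> c x fx; rewrite (linear_mapZ (f_hom.1 v)) fx scaler0.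
Defined.

Definition ker_mod v : lmodType R := submod (ker_pred v).

Lemma ker_map_subproof (a : qarr Q) (z : ker_mod (qsrc a)) :
  ker_pred (qtgt a) (rmap X a (subval z)).
Proof. by rewrite /= f_hom.2 (subvalP z) (linear_map0 (rmap_lin Y a)). Qed.

Definition ker_map a (z : ker_mod (qsrc a)) : ker_mod (qtgt a) :=
  Submod (ker_map_subproof z).

Lemma ker_map_lin a : linear (@ker_map a).
Proof. by move=> c x y; apply: subval_inj; rewrite /= (rmap_lin X a). Qed.

Definition ker_rep : rep R Q := @Rep R Q ker_mod ker_map ker_map_lin.

End Kernel.

(* Compare the inclusion of the kernel with the zero morphism. *)
Lemma rep_mono_injective (R : pzRingType) (Q : quiver) (X Y : rep R Q)
    (f : forall v, rmod X v -> rmod Y v) :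
  rep_mono f -> forall v, injective (f v).
Proof.
move=> [f_hom f_cancel] v x y fxy.
have incl_hom : is_rep_hom (X := ker_rep f_hom) (fun v z => subval z) by [].
have zero_hom : is_rep_hom (X := ker_rep f_hom) (Y := X) (fun v z => 0).
  split=> [u c s t|a s]; first by rewrite scaler0 addr0.
  by rewrite (linear_map0 (rmap_lin X a)).
have f_incl_zero u (z : rmod (ker_rep f_hom) u) : f u (subval z) = f u 0.
  by rewrite (subvalP z) (linear_map0 (f_hom.1 u)).
have ker0 := f_cancel _ _ _ incl_hom zero_hom f_incl_zero.
have ker_xy : ker_pred f_hom v (x - y).
  by rewrite /= (linear_mapB (f_hom.1 v)) fxy subrr.
by apply/eqP; rewrite -subr_eq0; apply/eqP; exact: (ker0 v (Submod ker_xy)).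
Qed.

Section FinitePred.
Variables (T : Type) (t0 : T).

Definition finite_pred (P : T -> Prop) := exists l, forall x, P x -> List.In x l.

Definition list_enum (P : T -> Prop) (l : list T) :=
  List.NoDup l /\ forall x, List.In x l <-> P x.

Lemma finite_pred_enum P : finite_pred P -> exists l, list_enum P l.
Proof.
move=> [l Pl]; pose dec (x y : T) := pselect (x = y).
exists (List.nodup dec (List.filter (fun x => `[< P x >]) l)).
split=> [|x]; first exact: List.NoDup_nodup.
rewrite List.nodup_In List.filter_In; split; first by move=> [_ /asboolP].
by move=> Px; split; [exact: Pl | exact/asboolP].
Qed.

Lemma list_enum_size P l l' :
  list_enum P l -> list_enum P l' -> List.length l = List.length l'.
Proof.
move=> [l_uniq l_P] [l'_uniq l'_P]; apply/eqP; rewrite eqn_leq.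
apply/andP; split; apply/ssrnat.leP; apply: List.NoDup_incl_length => // x.
  by move=> /l_P /l'_P.
by move=> /l'_P /l_P.
Qed.

Lemma list_enum_card P l : list_enum P l -> has_card P (List.length l).
Proof.
move=> [l_uniq l_P]; exists (fun j : 'I_(List.length l) => List.nth j l t0).
split=> [i j ij|x]; first apply: val_inj.
  by apply: (proj1 (List.NoDup_nth l t0) l_uniq) ij; apply/ssrnat.ltP.
split=> [/l_P /(List.In_nth _ _ t0) [n [/ssrnat.ltP n_lt <-]]|[j <-]].
  by exists (Ordinal n_lt).
by apply/l_P; apply: List.nth_In; apply/ssrnat.ltP.
Qed.

Lemma infinite_pred_seq P : ~ finite_pred P ->
  exists w : nat -> T, (forall k, P (w k)) /\ injective w.
Proof.
move=> P_inf.
have fresh l : exists x, P x /\ ~ List.In x l.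
  apply: contra_notP P_inf => no_fresh; exists l => x Px.
  by apply: contra_notP no_fresh => x_notin; exists x.
pose next l := projT1 (cid (fresh l)).
have nextP l : P (next l) /\ ~ List.In (next l) l := projT2 (cid (fresh l)).
pose fix prefix k := if k is k'.+1 then next (prefix k') :: prefix k' else [::].
have in_prefix j k : (j < k)%N -> List.In (next (prefix j)) (prefix k).
  elim: k => // k IHk; rewrite ltnS leq_eqVlt => /orP[/eqP ->|/IHk]; by [left|right].
exists (fun k => next (prefix k)); split=> [k|j k jk]; first exact: (nextP _).1.
have [j_lt_k|k_lt_j|//] := ltngtP j k.
  by case: (nextP (prefix k)).2; rewrite -jk; apply: in_prefix.
by case: (nextP (prefix j)).2; rewrite jk; apply: in_prefix.
Qed.

Lemma NoDup_flat_map (A : Type) (F : A -> list T) (l : list A) : List.NoDup l ->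
  (forall a, List.In a l -> List.NoDup (F a)) ->
  (forall a a' x, List.In a l -> List.In a' l ->
     List.In x (F a) -> List.In x (F a') -> a = a') ->
  List.NoDup (List.flat_map F l).
Proof.
elim: l => [|a l IHl] /= l_uniq F_uniq F_disj; first by constructor.
inversion l_uniq as [|a' l' a_notin l_uniq' [a'a l'l]]; subst.
apply: List.NoDup_app; first exact: F_uniq (or_introl _).
  apply: IHl => // [a' a'l|a1 a2 x a1l a2l]; first exact: F_uniq (or_intror _).
  exact: F_disj (or_intror _) (or_intror _).
move=> x xa /List.in_flat_map [a' [a'l xa']]; apply: a_notin.
by rewrite (F_disj a a' x (or_introl erefl) (or_intror a'l) xa xa').
Qed.

End FinitePred.

Section TreeStages.
Variables (Q : quiver) (r : qvert Q) (Q_tree : is_tree r).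
Local Notation V := (qvert Q).

Definition child (b c : V) := exists a : qarr Q, qsrc a = b /\ qtgt a = c.

Definition antichain (w : nat -> V) := forall j k, j <> k -> ~ reach (w j) (w k).

Lemma child_reach b c : child b c -> reach b c.
Proof. by move=> [a [<- <-]]; exists [:: a]. Qed.

Lemma stage0 (u x : V) : stage u 0 x <-> x = u.
Proof. by split=> [[[|a p] [up //]]|->] //; exists [::]. Qed.

Lemma stageS (u x : V) k : stage u k.+1 x <-> exists2 c, child u c & stage c k x.
Proof.
split=> [[[|a p] [up pk]] //|[c [a [au ac]] [p [cp pk]]]].
  by case: up pk => <- ap [pk]; exists (qtgt a); [exists a | exists p].
by exists (a :: p); rewrite /= au ac pk.
Qed.

Lemma stage_reach_eq i (x y : V) : stage r i x -> stage r i y -> reach x y -> x = y.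
Proof.
move=> [q [rq qi]] [q' [rq' q'i]] [p xp].
have := congr1 size (is_qpath_uniq Q_tree (is_qpath_cat rq xp) rq').
rewrite size_cat qi q'i -[RHS]addn0 => /addnI /size0nil p0.
by move: xp; rewrite p0.
Qed.

Lemma child_reach_eq (b c c' x : V) : child b c -> child b c' ->
  reach c x -> reach c' x -> c = c'.
Proof.
move=> [a [ab <-]] [a' [a'b <-]] [p ap] [p' a'p'].
have [q rq] := reach_root Q_tree b.
have := is_qpath_uniq Q_tree (is_qpath_cat rq (q := a :: p) (conj ab ap))
  (is_qpath_cat rq (q := a' :: p') (conj a'b a'p')).
by elim: q {rq} => [[->]|a0 q IHq [/IHq]].
Qed.

Lemma child_sibling_incomparable (b c c' x : V) : child b c -> child b c' ->
  c <> c' -> reach c x -> ~ reach c' x /\ ~ reach x c'.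
Proof.
move=> bc bc' cc' cx; split=> [c'x|xc']; apply: cc'.
  exact: child_reach_eq bc bc' cx c'x.
exact: child_reach_eq bc bc' (reach_trans cx xc') (reach_refl c').
Qed.

Definition eventually_constant (f : nat -> nat) :=
  exists N, forall k, (N <= k)%N -> f k = f N.

Lemma eventually_constant_all (A : Type) (F : A -> nat -> nat) (l : list A) :
  (forall a, List.In a l -> eventually_constant (F a)) ->
  exists N, forall a, List.In a l -> forall k, (N <= k)%N -> F a k = F a N.
Proof.
elim: l => [|a l IHl] F_ev; first by exists 0%N.
have [N1 N1P] := IHl (fun a' a'l => F_ev a' (or_intror a'l)).
have [N0 N0P] := F_ev a (or_introl erefl).
exists (maxn N0 N1) => a' [<-|a'l] k k_ge.
  by rewrite N0P ?(leq_trans (leq_maxl _ _) k_ge) // N0P // leq_maxl.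
by rewrite N1P ?(leq_trans (leq_maxr _ _) k_ge) // N1P // leq_maxr.
Qed.

Section FiniteStages.
Hypothesis stages_finite : forall i, finite_pred (stage r i).

Lemma stage_finite (u : V) k : finite_pred (stage u k).
Proof.
have [q rq] := reach_root Q_tree u; have [l lP] := stages_finite (size q + k).
exists l => x [p [up pk]]; apply: lP; exists (q ++ p).
by rewrite size_cat pk; split=> //; apply: is_qpath_cat rq up.
Qed.

Definition stage_list (u : V) k := projT1 (cid (finite_pred_enum (stage_finite u k))).

Lemma stage_listP (u : V) k : list_enum (stage u k) (stage_list u k).
Proof. exact: projT2 (cid (finite_pred_enum (stage_finite u k))). Qed.

Definition stage_size (u : V) k := List.length (stage_list u k).

Lemma stage_sizeE (u : V) k l :
  list_enum (stage u k) l -> List.length l = stage_size u k.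
Proof. by move=> ul; apply: list_enum_size ul (stage_listP u k). Qed.

(* Stage k+1 below b is the disjoint union of the stages k below its children. *)
Lemma stage_sizeS (b : V) (l : list V) k : list_enum (child b) l ->
  stage_size b k.+1 = List.list_sum (List.map (stage_size^~ k) l).
Proof.
move=> [l_uniq lP]; rewrite -(@stage_sizeE _ _ (List.flat_map (stage_list^~ k) l)).
  by rewrite List.length_flat_map.
split=> [|x].
  apply: NoDup_flat_map => // [c _|c c' x cl c'l xc xc'].
    exact: (stage_listP c k).1.
  have /(stage_listP c k).2 [p [cp _]] := xc.
  have /(stage_listP c' k).2 [p' [c'p' _]] := xc'.
  exact: child_reach_eq ((lP c).1 cl) ((lP c').1 c'l)
    (ex_intro _ p cp) (ex_intro _ p' c'p').
rewrite List.in_flat_map stageS; split=> [[c [cl xc]]|[c bc xc]].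
  by exists c; [exact/lP | exact/(stage_listP c k).2].
by exists c; split; [exact/lP | exact/(stage_listP c k).2].
Qed.

Lemma children_finite (b : V) : finite_pred (child b).
Proof.
have [l lP] := stage_finite b 1; exists l => c bc; apply: lP.
by apply/stageS; exists c => //; apply/stage0.
Qed.

Lemma eventually_constant_children (b : V) :
  (forall c, child b c -> eventually_constant (stage_size c)) ->
  eventually_constant (stage_size b).
Proof.
move=> children_ev; have [l lP] := finite_pred_enum (children_finite b).
have [N NP] := eventually_constant_all (fun c cl => children_ev c ((lP.2 c).1 cl)).
exists N.+1 => -[|k] // k_ge; rewrite !(stage_sizeS _ lP).
by congr List.list_sum; apply: List.map_ext_in => c cl; apply: NP.
Qed.

Definition unsettled (u : V) := ~ eventually_constant (stage_size u).

(* If no unsettled vertex below u had a sibling, the unsettled vertices below u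
   would form a single chain, and every stage below u would be a singleton. *)
Lemma unsettled_branch (u : V) : unsettled u ->
  exists b c c', [/\ reach u b, child b c, child b c', c <> c' & unsettled c].
Proof.
move=> u_unset; apply: contra_notP (u_unset) => no_branch.
have unique_child b : reach u b -> unsettled b ->
    exists c, [/\ child b c, unsettled c & forall c', child b c' -> c' = c].
  move=> ub b_unset.
  have [c bc c_unset] : exists2 c, child b c & unsettled c.
    apply: contra_notP b_unset => settled; apply: eventually_constant_children.
    by move=> c bc; apply: contra_notP settled => c_unset; exists c.
  exists c; split=> // c' bc'; apply: contra_notP no_branch => c'c.
  by exists b, c, c'; split=> // cc'; apply: c'c.
have singleton k x : reach u x -> unsettled x -> exists y, list_enum (stage x k) [:: y].
  elim: k x => [|k IHk] x ux x_unset.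
    exists x; split; first by constructor; [by [] | constructor].
    by move=> z; rewrite stage0; split=> [[->|[]]|->]; [|left].
  have [c [xc c_unset c_uniq]] := unique_child x ux x_unset.
  have [y [y_uniq yP]] := IHk c (reach_trans ux (child_reach xc)) c_unset.
  exists y; split=> // z; rewrite yP stageS.
  by split=> [zc|[c' xc' zc']]; [exists c | rewrite -(c_uniq c' xc')].
exists 0%N => k _.
have [y yk] := singleton k u (reach_refl u) u_unset.
have [y0 y00] := singleton 0%N u (reach_refl u) u_unset.
by rewrite -(stage_sizeE yk) -(stage_sizeE y00).
Qed.

(* Following unsettled vertices down the tree, each branching leaves behind a
   sibling subtree; the siblings split off at successive branchings are
   pairwise incomparable. *)
Lemma finite_stages_antichain : ~ barren r -> exists w, antichain w.
Proof.
move=> not_barren.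
have r_unset : unsettled r.
  move=> [N NP]; apply: not_barren; exists (stage_size r); split; last by exists N.
  move=> i; exact: (@list_enum_card V r _ _ (stage_listP r i)).
have branch u : unsettled u -> exists cc : V * V, exists b,
    [/\ reach u b, child b cc.1, child b cc.2, cc.1 <> cc.2 & unsettled cc.1].
  by move=> /unsettled_branch [b [c [c' branch_bcc']]]; exists (c, c'), b.
pose next u := if pselect (unsettled u) is left u_unset
  then projT1 (cid (branch u u_unset)) else (u, u).
have nextP u : unsettled u -> exists b, [/\ reach u b, child b (next u).1,
    child b (next u).2, (next u).1 <> (next u).2 & unsettled (next u).1].
  move=> u_unset; rewrite /next; case: pselect => [u_unset'|//].
  exact: projT2 (cid (branch u u_unset')).
pose fix spine k := if k is k'.+1 then (next (spine k')).1 else r.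
have spine_unset k : unsettled (spine k).
  by elim: k => //= k IHk; have [b [_ _ _ _]] := nextP _ IHk.
have spine_reach_next k :
    reach (spine k) (spine k.+1) /\ reach (spine k) (next (spine k)).2.
  have [b [ub bc bc' _ _]] := nextP _ (spine_unset k).
  by split; apply: reach_trans ub (child_reach _).
have spine_reach j k : (j <= k)%N -> reach (spine j) (spine k).
  elim: k => [|k IHk]; first by rewrite leqn0 => /eqP ->; exact: reach_refl.
  rewrite leq_eqVlt => /orP[/eqP ->|]; first exact: reach_refl.
  by move=> /IHk jk; apply: reach_trans jk (spine_reach_next k).1.
exists (fun k => (next (spine k)).2).
have apart j k : (j < k)%N -> ~ reach (next (spine j)).2 (next (spine k)).2 /\
    ~ reach (next (spine k)).2 (next (spine j)).2.
  move=> jk; have [b [_ bc bc' cc' _]] := nextP _ (spine_unset j).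
  apply: (child_sibling_incomparable bc bc' cc').
  exact: reach_trans (spine_reach _ _ jk) (spine_reach_next k).2.
move=> j k jk; have [j_lt_k|k_lt_j|//] := ltngtP j k.
  exact: (apart j k j_lt_k).1.
exact: (apart k j k_lt_j).2.
Qed.

End FiniteStages.

Lemma not_barren_antichain : ~ barren r -> exists w, antichain w.
Proof.
move=> not_barren; have [stages_fin|] := pselect (forall i, finite_pred (stage r i)).
  exact: finite_stages_antichain.
move=> /existsNP [i /infinite_pred_seq [w [w_stage w_inj]]].
by exists w => j k jk wjk; apply/jk/w_inj/(stage_reach_eq (w_stage j) (w_stage k)).
Qed.

End TreeStages.

Section Push.
Variables (R : pzRingType) (Q : quiver) (r : qvert Q) (Q_tree : is_tree r).

(* In a tree, [push x w] is the image of [x] at [w] along the unique path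
   ([0] if there is no path). *)
Definition push (X : rep R Q) (v : qvert Q) (x : rmod X v) (w : qvert Q) : rmod X w :=
  if pselect (exists z p, @transport _ _ X v x p w z) is left zp
  then projT1 (cid zp) else 0.

Lemma pushE (X : rep R Q) v x p w z : @transport _ _ X v x p w z -> push x w = z.
Proof.
move=> xz; rewrite /push; case: pselect => [zp|[]]; last by exists z, p.
case: (cid zp) => z' /= [p' xz'].
have pp' := is_qpath_uniq Q_tree (transport_qpath xz) (transport_qpath xz').
by subst p'; exact: transport_fun xz' xz.
Qed.

Variable X : rep R Q.

Lemma push_linear v w : reach v w -> linear (fun x : rmod X v => push x w).
Proof.
move=> [p vp] c x y.
have [z xz] := transport_exists vp x; have [z' yz'] := transport_exists vp y.
by rewrite (pushE (transport_linear c xz yz')) (pushE xz) (pushE yz').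
Qed.

Lemma push_arrow (a : qarr Q) (y : rmod X (qsrc a)) w :
  reach (qtgt a) w -> push (rmap X a y) w = push y w.
Proof.
move=> [p ap]; have [z yz] := transport_exists ap (rmap X a y).
by rewrite (pushE yz) (pushE (transport_cons yz)).
Qed.

Lemma push_hom (Y : rep R Q) (f : forall v, rmod X v -> rmod Y v) :
  is_rep_hom f -> forall v x w, reach v w -> push (f v x) w = f w (push x w).
Proof.
move=> f_hom v x w [p vp]; have [z xz] := transport_exists vp x.
by rewrite (pushE xz) (pushE (transport_hom f_hom xz)).
Qed.

End Push.

Section PointRep.
Variables (R : pzRingType) (Q : quiver) (E : lmodType R) (w : qvert Q).

Definition below_pred (v : qvert Q) : submod_pred E.
Proof.
refine (@SubmodPred _ E (fun x => reach v w \/ x = 0) _ _ _ _).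
- by right.
- by move=> x y [vw|->] [vw'|->]; rewrite ?addr0; auto.
- by move=> x [vw|->]; rewrite ?oppr0; auto.
- by move=> a x [vw|->]; rewrite ?scaler0; auto.
Defined.

Definition point_mod (v : qvert Q) : lmodType R := submod (below_pred v).

Definition point_map (a : qarr Q) (x : point_mod (qsrc a)) : point_mod (qtgt a) :=
  if pselect (reach (qtgt a) w) is left aw
  then @Submod _ _ (below_pred (qtgt a)) (subval x) (or_introl aw)
  else 0.

Lemma point_map_in a x : reach (qtgt a) w -> subval (@point_map a x) = subval x.
Proof. by rewrite /point_map; case: pselect. Qed.

Lemma point_mod_eq v (x y : point_mod v) : ~ reach v w -> x = y.
Proof.
by move=> vw; apply: subval_inj; case: (subvalP x) => // ->; case: (subvalP y).
Qed.

Lemma point_map_lin a : linear (@point_map a).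
Proof.
move=> c x y; have [aw|aw] := pselect (reach (qtgt a) w); last exact: point_mod_eq.
by apply: subval_inj; rewrite /= !point_map_in.
Qed.

Definition point_rep : rep R Q := @Rep R Q point_mod point_map point_map_lin.

Lemma transport_point_rep v x p u z :
  @transport _ _ point_rep v x p u z -> reach u w -> subval z = subval x.
Proof.
elim: p v x => [|a p IHp] v x /=; first by move=> [e <-] _; subst u.
move=> [e xz] uw; subst v; rewrite (IHp _ _ xz uw) /= point_map_in //.
by apply: reach_trans uw; exists p; exact: transport_qpath xz.
Qed.

Variables (r : qvert Q) (Q_tree : is_tree r).

Lemma point_rep_push v (x : rmod point_rep v) :
  reach v w -> subval (push x w) = subval x.
Proof.
move=> [p vp]; have [z xz] := transport_exists vp x.
by rewrite (pushE Q_tree xz) (transport_point_rep xz) //; exact: reach_refl.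
Qed.

Hypothesis E_inj : injective_lmod E.

(* Extend [g] at [w] along [f w] using injectivity of [E], and propagate the
   extension to every [v] above [w] by first pushing along the path to [w]. *)
Lemma point_rep_injective : injective_rep point_rep.
Proof.
move=> X Y f g f_mono g_hom; have f_hom := f_mono.1.
have g_lin : linear (fun x => subval (g w x)).
  by move=> c x y; rewrite (g_hom.1 w).
have [H [H_lin H_ext]] :=
  E_inj (f_hom.1 w) (rep_mono_injective f_mono (v:=w)) g_lin.
pose h v (y : rmod Y v) : rmod point_rep v :=
  if pselect (reach v w) is left vw
  then @Submod _ _ (below_pred v) (H (push y w)) (or_introl vw) else 0.
have hE v y : reach v w -> subval (h v y) = H (push y w).
  by rewrite /h; case: pselect.
exists h; split; first split.
- move=> v c x y; have [vw|vw] := pselect (reach v w); last exact: point_mod_eq.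
  apply: subval_inj; rewrite /= !hE //.
  by rewrite (push_linear Q_tree vw) (linear_mapD H_lin) (linear_mapZ H_lin).
- move=> a y; have [aw|aw] := pselect (reach (qtgt a) w); last exact: point_mod_eq.
  apply: subval_inj; rewrite /= point_map_in // !hE ?(push_arrow Q_tree) //.
  exact: reach_arrow aw.
- move=> v x; have [vw|vw] := pselect (reach v w); last exact: point_mod_eq.
  apply: subval_inj; rewrite hE // (push_hom Q_tree f_hom) // H_ext.
  by rewrite -(push_hom Q_tree g_hom) // point_rep_push.
Qed.

End PointRep.

Section ProductRep.
Variables (R : pzRingType) (Q : quiver) (I : Type) (E : I -> rep R Q).

Definition prod_mod (v : qvert Q) : lmodType R := prodmod (fun i => rmod (E i) v).

Definition prod_map (a : qarr Q) (x : prod_mod (qsrc a)) : prod_mod (qtgt a) :=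
  ProdMod (fun i => rmap (E i) a (pval x i)).

Lemma prod_map_lin a : linear (@prod_map a).
Proof. by move=> c x y; apply: pval_inj => i /=; rewrite (rmap_lin (E i) a). Qed.

Definition prod_rep : rep R Q := @Rep R Q prod_mod prod_map prod_map_lin.

Lemma prod_proj_hom i : is_rep_hom (X := prod_rep) (fun v x => pval x i).
Proof. by []. Qed.

Lemma dsum_proj_hom i : is_rep_hom (X := dsum_rep E) (fun v x => dval x i).
Proof. by []. Qed.

Definition dsum_incl v (x : rmod (dsum_rep E) v) : rmod prod_rep v := ProdMod (dval x).

Lemma dsum_incl_mono : rep_mono dsum_incl.
Proof.
split; first by split=> [v c x y|a x]; apply: pval_inj.
move=> Z g h _ _ gh v z; apply: dsum_ext => i.
by have /(congr1 (fun y => pval y i)) := gh v z.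
Qed.

End ProductRep.

Lemma nat_notin (s : seq nat) : exists j, ~ List.In j s.
Proof.
exists (sumn s).+1.
suff sumn_ub k : List.In k s -> (k <= sumn s)%N by move=> /sumn_ub; rewrite ltnn.
elim: s => //= a s IHs [->|/IHs]; first exact: leq_addr.
by move=> k_le; apply: leq_trans k_le (leq_addl _ _).
Qed.

Section DsumNotInjective.
Variables (R : pzRingType) (Q : quiver) (r : qvert Q) (Q_tree : is_tree r).
Variables (E : lmodType R) (e : E) (e_neq0 : e <> 0).
Variables (w : nat -> qvert Q) (w_antichain : antichain w).

(* A retraction of the inclusion into the product would send the constant
   family [e] at the root to a finitely supported family; pushing both to a
   vertex [w j] outside the support gives [e = 0]. *)
Lemma dsum_point_rep_not_injective :
  ~ injective_rep (dsum_rep (fun j => point_rep E (w j))).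
Proof.
set P := fun j => point_rep E (w j); move=> dsum_inj.
have id_hom : is_rep_hom (fun v (x : rmod (dsum_rep P) v) => x) by [].
have [h [h_hom h_retr]] := dsum_inj _ _ _ _ (dsum_incl_mono P) id_hom.
pose y0 := ProdMod (fun j => @Submod _ _ (below_pred E (w j) r) e
  (or_introl (reach_root Q_tree (w j)))) : rmod (prod_rep P) r.
have [s s_supp] := dsuppP (h r y0).
have [j j_notin_s] := nat_notin s.
pose y1 := push y0 (w j).
have y1_supp : fin_supp (pval y1).
  exists [:: j] => k k_neq_j; apply: point_mod_eq; apply: w_antichain.
  by move=> jk; apply: k_neq_j; left.
have y1E : y1 = dsum_incl (DSum y1_supp) by apply: pval_inj.
have hy1 : h (w j) y1 = DSum y1_supp by rewrite {1}y1E h_retr.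
have rw := reach_root Q_tree (w j).
have y1j : subval (pval y1 j) = e.
  have /= <- := push_hom Q_tree (prod_proj_hom P j) y0 rw.
  by rewrite (point_rep_push Q_tree).
have : subval (dval (h (w j) y1) j) = 0.
  rewrite /y1 -(push_hom Q_tree h_hom) //.
  have /= <- := push_hom Q_tree (dsum_proj_hom P j) (h r y0) rw.
  by rewrite (point_rep_push Q_tree) // s_supp.
by rewrite hy1 /= y1j.
Qed.

End DsumNotInjective.

Lemma nat_infinite : infinite_type nat.
Proof.
move=> [n [f [_ f_onto]]]; have [j j_notin] := nat_notin [seq f i | i <- enum 'I_n].
have [k fk] := (f_onto j).1 I; apply: j_notin; rewrite -fk.
have : f k \in [seq f i | i <- enum 'I_n] by rewrite map_f // mem_enum.
elim: [seq f i | i <- enum 'I_n] => //= a s IHs.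
by rewrite inE => /orP[/eqP ->|/IHs]; [left | right].
Qed.

Theorem lemma5p2 (R : nzRingType) (Q : quiver) (r : qvert Q) :
  is_tree r -> ~ barren r ->
  exists (I : Type) (E : I -> rep R Q),
    infinite_type I /\
    (forall i : I, injective_rep (E i)) /\
    ~ injective_rep (dsum_rep E).
Proof.
move=> Q_tree not_barren.
have [w w_antichain] := not_barren_antichain Q_tree not_barren.
have [e e_neq0] := charmod_neq0 R.
exists nat, (fun j => point_rep (charmod R) (w j)); split; first exact: nat_infinite.
split; first by move=> j; exact: point_rep_injective Q_tree (@charmod_injective R).
exact: (dsum_point_rep_not_injective (E := charmod R) Q_tree e_neq0 w_antichain).
Qed.
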